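(* Let $\mathfrak{X}=(X,\{R_i\}_{i=0}^s)$ be a symmetric association scheme with $|X|=n$ which is $Q$-polynomial with respect to $E_1$, and let $m=\mathrm{rank}\,E_1$. Let $\tilde X=\{\tilde x:x\in X\}\subset\mathbb{R}^m$ be the image of the spherical embedding of $\mathfrak{X}$ with respect to $E_1$, i.e. vectors with $\tilde x\cdot\tilde y=n(E_1)_{x,y}$ for all $x,y\in X$, regarded as a spherical $2$-design and $s$-distance set in $\sqrt{m}\,\mathbb{S}^{m-1}$ of size $n$. Then the degree $S$ of $\tilde X$ equals $s$, and for each $i\in\{0,1,\dots,s\}$ the projection matrices of $\tilde X$ satisfy $F_i=\frac1n q_i((nG)^\circ)$, where $G$ is the normalized Gram matrix and $q_0,\dots,q_s$ are the predegree polynomials of $\tilde X$.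
   Context: A symmetric association scheme $(X,\{R_i\}_{i=0}^s)$: $X$ finite, $R_0$ the diagonal, the $R_i$ partition $X\times X$, each $R_i$ symmetric, and $|\{z:(x,z)\in R_i,(z,y)\in R_j\}|$ depends only on $i,j$ and the $k$ with $(x,y)\in R_k$. Its adjacency matrices span a commutative algebra (the Bose–Mesner algebra) with primitive idempotents $E_0=\frac1nJ,E_1,\dots,E_s$. For a matrix $M$ and polynomial $f$, $f(M^\circ)$ is the matrix obtained by applying $f$ entrywise. The scheme is $Q$-polynomial with respect to $E_1$ if, for some ordering $E_0,E_1,E_{i_2},\dots,E_{i_s}$ of the idempotents, each $n E_{(\text{$j$-th})}=v_j^*((nE_1)^\circ)$ for a polynomial $v_j^*$ of degree $j$. (It is known that the embedded set $\tilde X$ lies on $\sqrt m\,\mathbb{S}^{m-1}$, is a spherical $2$-design and here is an $s$-distance set.) For a finite $Y\subset\sqrt{m}\,\mathbb{S}^{m-1}=\{\bm x:\bm x\cdot\bm x=m\}$ with $|Y|=n$: $A'(Y)=\{\bm x\cdot\bm y:\bm x\ne\bm y\in Y\}\cup\{m\}$. $C(Y)$: real functions with $(f,g)=\frac1n\sum f g$; $\zeta_{\bm a}(p)(\bm x)=p(\bm a\cdot\bm x)$; $\mathrm{Pol}_0$ = constants, $\mathrm{Pol}_1=\mathrm{Span}\{\zeta_{\bm a}(p):\deg p\le1\}$, $\mathrm{Pol}_k=\mathrm{Span}\{fg:f\in\mathrm{Pol}_1,g\in\mathrm{Pol}_{k-1}\}$ (equivalently $\mathrm{Span}\{\zeta_{\bm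 a}(p):\deg p\le k\}$); degree $S=\min\{i:\mathrm{Pol}_i(Y)=C(Y)\}$; $\mathrm{Harm}_0=\mathrm{Pol}_0$, $\mathrm{Harm}_k=\mathrm{Pol}_k\cap\mathrm{Pol}_{k-1}^\perp$; $F_i$ is the matrix of the orthogonal projection onto $\mathrm{Harm}_i(Y)$, matrices acting by $(Mf)(\bm x)=\sum_{\bm y}M_{\bm x,\bm y}f(\bm y)$. $G=\frac1n(\bm x\cdot\bm y)_{\bm x,\bm y}$. With $\kappa_\alpha=|\{(\bm x,\bm y):\bm x\cdot\bm y=\alpha\}|$ and $\langle p,q\rangle=\frac1{n^2}\sum_{\alpha\in A'(Y)}\kappa_\alpha p(\alpha)q(\alpha)$, the predegree polynomials $q_0,\dots,q_s$ satisfy $\deg q_k=k$ and $\langle q_k,q_h\rangle=\delta_{k,h}q_k(m)$. *)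

From HB Require Import structures.
From mathcomp Require Import all_boot all_order all_algebra.
Set Implicit Arguments. Unset Strict Implicit. Unset Printing Implicit Defensive.
Import Order.TTheory GRing.Theory Num.Theory.
Local Open Scope ring_scope.

(* The point set X is labelled as 'I_n; the relations are given by a
   class function rc : X -> X -> 'I_s.+1, with (x,y) \in R_i <-> rc x y = i. *)
Definition is_sym_assoc_scheme (n s : nat) (rc : 'I_n -> 'I_n -> 'I_s.+1) : Prop :=
  [/\ (forall x y, (rc x y == ord0) = (x == y)),
      (forall x y, rc x y = rc y x),
      (forall i : 'I_s.+1, exists x y, rc x y = i) &
      (forall (i j : 'I_s.+1) (x y x' y' : 'I_n), rc x y = rc x' y' ->
         #|[set z | (rc x z == i) && (rc z y == j)]|
         = #|[set z | (rc x' z == i) && (rc z y' == j)]|)].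

Definition adjm (R : nzRingType) (n s : nat) (rc : 'I_n -> 'I_n -> 'I_s.+1)
  (i : 'I_s.+1) : 'M[R]_n := \matrix_(x, y) (rc x y == i)%:R.

Definition in_BM (R : nzRingType) (n s : nat) (rc : 'I_n -> 'I_n -> 'I_s.+1)
  (M : 'M[R]_n) : Prop :=
  exists c : 'I_s.+1 -> R, M = \sum_i c i *: adjm R rc i.

(* E_0, ..., E_s are the primitive idempotents of the Bose-Mesner algebra
   (s+1 nonzero pairwise orthogonal idempotents in the (s+1)-dimensional
   algebra, summing to the identity), with E_0 = J/n. *)
Definition primitive_idempotents (R : fieldType) (n s : nat)
  (rc : 'I_n -> 'I_n -> 'I_s.+1) (E : 'I_s.+1 -> 'M[R]_n) : Prop :=
  [/\ (forall i, in_BM rc (E i)),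
      (forall i j, E i *m E j = (i == j)%:R *: E i),
      (forall i, E i != 0),
      \sum_i E i = 1%:M &
      E ord0 = (n%:R)^-1 *: const_mx 1].

(* Q-polynomial with respect to E_1 = E (inord 1), in the ordering given by E:
   n E_j = v_j^*((n E_1)^o) with deg v_j^* = j. *)
Definition Q_polynomial (R : fieldType) (n s : nat) (E : 'I_s.+1 -> 'M[R]_n) : Prop :=
  exists v : 'I_s.+1 -> {poly R},
    forall j : 'I_s.+1, size (v j) = j.+1 /\
      n%:R *: E j = map_mx (fun a => (v j).[a]) (n%:R *: E (inord 1)).

Definition dotv (R : nzRingType) (m : nat) (u v : 'rV[R]_m) : R := (u *m v^T) 0 0.

Section Sphere.
Variables (R : realFieldType) (n m : nat) (Y : 'I_n -> 'rV[R]_m).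

(* C(Y): real functions on Y, represented as column vectors indexed by 'I_n *)
Definition innerC (g h : 'cV[R]_n) : R := (n%:R)^-1 * \sum_x g x 0 * h x 0.

Definition zeta (a : 'rV[R]_m) (p : {poly R}) : 'cV[R]_n :=
  \col_x p.[dotv a (Y x)].

Definition inPol (k : nat) (g : 'cV[R]_n) : Prop :=
  exists l : seq ('rV[R]_m * {poly R}),
    all (fun ap : 'rV[R]_m * {poly R} => (size ap.2 <= k.+1)%N) l /\
    g = \sum_(ap <- l) zeta ap.1 ap.2.

Definition inHarm (k : nat) (g : 'cV[R]_n) : Prop :=
  match k with
  | 0 => inPol 0 g
  | k'.+1 => inPol k g /\ (forall h, inPol k' h -> innerC g h = 0)
  end.

Definition is_orth_proj (H : 'cV[R]_n -> Prop) (F : 'M[R]_n) : Prop :=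
  forall g, H (F *m g) /\ (forall h, H h -> innerC (g - F *m g) h = 0).

Definition is_degree (S : nat) : Prop :=
  (forall g, inPol S g) /\ (forall i, (i < S)%N -> ~ (forall g, inPol i g)).

Definition Aprime : seq R :=
  undup (m%:R :: [seq dotv (Y p.1) (Y p.2) | p <- enum [pred p : 'I_n * 'I_n | p.1 != p.2]]).

Definition kappa (a : R) : nat :=
  #|[pred p : 'I_n * 'I_n | dotv (Y p.1) (Y p.2) == a]|.

Definition pinner (p q : {poly R}) : R :=
  (n%:R ^+ 2)^-1 * \sum_(a <- Aprime) (kappa a)%:R * p.[a] * q.[a].

Definition predegree (s : nat) (q : nat -> {poly R}) : Prop :=
  forall k h, (k <= s)%N -> (h <= s)%N ->
    size (q k) = k.+1 /\ pinner (q k) (q h) = (k == h)%:R * (q k).[m%:R].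

End Sphere.

(* Let V_k be the column space of E_k, so that C(X) is the orthogonal sum of
   V_0, ..., V_s and E_k is the projection onto V_k.  Since
   n E_j = v_j^*(nG) entrywise, every column of E_j is a zeta function of
   degree j, whence V_0 + ... + V_d is contained in Pol_d.  Conversely
   multiplying by a linear function maps V_j into V_0 + ... + V_(j+1): for
   l + j < k the entrywise product E_l o E_j is a combination of
   E_0, ..., E_(l+j), hence Frobenius-orthogonal to E_k, and that Frobenius
   product is the sum over (w,y,z) of the squares of
   sum_x E_k(w,x) E_l(x,y) E_j(x,z), which therefore all vanish.  Hence
   Pol_d = V_0 + ... + V_d, Harm_i = V_i, F_i = E_i, and the degree is s
   because E_s <> 0.  Finally
   <v_h^*, v_l^*> is the Frobenius product of E_h and E_l, so the v_i^* are
   orthogonal, and with the normalisation <q_i, q_i> = q_i(m) this forces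
   q_i = v_i^*, i.e. F_i = (1/n) q_i((nG)^o). *)

From mathcomp Require Import all_boot all_order all_algebra.
From mathcomp Require Import ring.
Import GRing.Theory Num.Theory.
Set Implicit Arguments. Unset Strict Implicit. Unset Printing Implicit Defensive.
Local Open Scope ring_scope.

Lemma mxtrace_idem (F : fieldType) n (A : 'M[F]_n) :
  A *m A = A -> \tr A = (\rank A)%:R.
Proof.
move=> AA.
have base_inv : row_base A *m col_base A = 1%:M.
  apply: (row_full_inj (col_base_full A)); apply: (row_free_inj (row_base_free A)).
  by rewrite mulmx1 mulmxA mulmx_base -mulmxA mulmx_base AA.
by rewrite -{1}(mulmx_base A) mxtrace_mulC base_inv mxtrace1.
Qed.

Lemma mulmx_col_inj (F : fieldType) m n (A B : 'M[F]_(m, n)) :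
  (forall g : 'cV_n, A *m g = B *m g) -> A = B.
Proof. by move=> AB; apply/trmx_inj/eqP/mulmxP => u; rewrite -[u]trmxK -!trmx_mul AB. Qed.

Section InnerProduct.
Variable R : realFieldType.

Lemma sum_sqr_eq0 (I : finType) (f : I -> R) :
  \sum_i f i ^+ 2 = 0 -> forall i, f i = 0.
Proof.
move=> S i; apply/eqP; rewrite -sqrf_eq0; apply/eqP.
by apply: (psumr_eq0P _ S) => // j _; apply: sqr_ge0.
Qed.

Lemma mulmx_trmx_eq0 m n (B : 'M[R]_(m, n)) : B *m B^T = 0 -> B = 0.
Proof.
move=> BBt; apply/matrixP => x j; rewrite mxE.
apply: (sum_sqr_eq0 (f := fun j => B x j)) j.
transitivity ((B *m B^T) x x); last by rewrite BBt mxE.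
by rewrite mxE; apply: eq_bigr => k _; rewrite mxE expr2.
Qed.

Lemma innerCE n (g h : 'cV[R]_n) : innerC g h = n%:R^-1 * (g^T *m h) 0 0.
Proof. by rewrite /innerC mxE; congr (_ * _); apply: eq_bigr => x _; rewrite mxE. Qed.

Lemma innerC_trmx n (M : 'M[R]_n) (g h : 'cV[R]_n) :
  innerC g (M *m h) = innerC (M^T *m g) h.
Proof. by rewrite !innerCE trmx_mul trmxK mulmxA. Qed.

Lemma innerC0r n (g : 'cV[R]_n) : innerC g 0 = 0.
Proof. by rewrite innerCE mulmx0 mxE mulr0. Qed.

Lemma innerC0l n (g : 'cV[R]_n) : innerC 0 g = 0.
Proof. by rewrite innerCE trmx0 mul0mx mxE mulr0. Qed.

Lemma innerCBl n (f g h : 'cV[R]_n) : innerC (f - g) h = innerC f h - innerC g h.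
Proof. by rewrite !innerCE linearB mulmxBl !mxE mulrBr. Qed.

Lemma innerC_eq0 n (g : 'cV[R]_n) : innerC g g = 0 -> g = 0.
Proof.
case: n g => [g _|n g]; first exact: flatmx0.
rewrite /innerC => /eqP; rewrite mulf_eq0 invr_eq0 pnatr_eq0 /= => /eqP S.
apply/matrixP => x o; rewrite (ord1 o) mxE.
apply: (sum_sqr_eq0 (f := fun x => g x 0)); rewrite -[RHS]S.
by apply: eq_bigr => y _; rewrite expr2.
Qed.

Lemma orth_proj_unique n (H : 'cV[R]_n -> Prop) (F F' : 'M[R]_n) :
  (forall f g, H f -> H g -> H (f - g)) ->
  is_orth_proj H F -> is_orth_proj H F' -> F = F'.
Proof.
move=> HB PF PF'; apply: mulmx_col_inj => g.
have [HFg orthF] := PF g; have [HF'g orthF'] := PF' g.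
set u := F *m g - F' *m g; have Hu : H u by apply: HB.
suff /innerC_eq0/eqP : innerC u u = 0 by rewrite subr_eq0 => /eqP.
have -> : innerC u u = innerC ((g - F' *m g) - (g - F *m g)) u.
  by rewrite opprB [in RHS]addrC [in RHS]addrA subrK.
by rewrite innerCBl orthF' // orthF // subrr.
Qed.

End InnerProduct.

Section SymmetricIdempotent.
Variables (R : comNzRingType) (n : nat).

Lemma symidem_contract (M : 'M[R]_n) : M *m M = M -> M^T = M ->
  forall (a : 'I_n -> R) (c : 'I_n -> 'I_n -> R),
  \sum_y \sum_x \sum_x' a x * a x' * c x x' * (M x y * M x' y)
  = \sum_x \sum_x' a x * a x' * c x x' * M x x'.
Proof.
move=> MM Mt a c; rewrite exchange_big; apply: eq_bigr => x _.
rewrite exchange_big; apply: eq_bigr => x' _; rewrite -mulr_sumr; congr (_ * _).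
by rewrite -[in RHS]MM mxE; apply: eq_bigr => y _; rewrite -[in M y x']Mt mxE.
Qed.

Lemma sum_sqr_triple (A B C : 'M[R]_n) :
  A *m A = A -> A^T = A -> B *m B = B -> B^T = B -> C *m C = C -> C^T = C ->
  \sum_w \sum_y \sum_z (\sum_x A w x * B x y * C x z) ^+ 2
  = \sum_x \sum_x' A x x' * B x x' * C x x'.
Proof.
move=> AA At BB Bt CC Ct.
have sum_z w y : \sum_z (\sum_x A w x * B x y * C x z) ^+ 2
    = \sum_x \sum_x' (A w x * B x y) * (A w x' * B x' y) * 1 * C x x'.
  rewrite -(symidem_contract CC Ct); apply: eq_bigr => z _.
  rewrite expr2 mulr_suml; apply: eq_bigr => x _; rewrite mulr_sumr.
  by apply: eq_bigr => x' _; ring.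
have sum_y w : \sum_y \sum_x \sum_x' (A w x * B x y) * (A w x' * B x' y) * 1 * C x x'
    = \sum_x \sum_x' A w x * A w x' * C x x' * B x x'.
  rewrite -(symidem_contract BB Bt); apply: eq_bigr => y _.
  by apply: eq_bigr => x _; apply: eq_bigr => x' _; ring.
under eq_bigr do under eq_bigr do rewrite sum_z.
under eq_bigr do rewrite sum_y.
transitivity (\sum_w \sum_x \sum_x' 1 * 1 * (C x x' * B x x') * (A x w * A x' w)).
  apply: eq_bigr => w _; apply: eq_bigr => x _; apply: eq_bigr => x' _.
  by rewrite -[in A x w]At -[in A x' w]At !mxE; ring.
rewrite symidem_contract //; apply: eq_bigr => x _; apply: eq_bigr => x' _; ring.
Qed.

End SymmetricIdempotent.

Lemma graded_basis_expand (R : fieldType) s (w : 'I_s.+1 -> {poly R}) :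
  (forall j, size (w j) = j.+1) ->
  forall k, (k <= s.+1)%N -> forall p : {poly R}, (size p <= k)%N ->
  exists c : 'I_s.+1 -> R,
    (forall h : 'I_s.+1, (k <= h)%N -> c h = 0) /\ p = \sum_h c h *: w h.
Proof.
move=> size_w; elim=> [|k IH] ks p sp.
  exists (fun _ => 0); split=> //; move: sp; rewrite size_poly_leq0 => /eqP ->.
  by rewrite big1 // => h _; rewrite scale0r.
pose hk : 'I_s.+1 := inord k.
have hkE : (hk : nat) = k by rewrite inordK.
have lc_neq0 : lead_coef (w hk) != 0 by rewrite lead_coef_eq0 -size_poly_eq0 size_w.
pose a := p`_k / lead_coef (w hk).
have size_rest : (size (p - a *: w hk)%R <= k)%N.
  apply/leq_sizeP => j kj; rewrite coefB coefZ.
  case: (ltngtP k j) kj => // [kj|<-] _.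
    by rewrite !nth_default ?mulr0 ?subr0 // ?size_w ?hkE // (leq_trans sp kj).
  have -> : (w hk)`_k = lead_coef (w hk) by rewrite lead_coefE size_w hkE.
  by rewrite divfK // subrr.
have [c [c_hi Hc]] := IH (ltnW ks) _ size_rest.
exists (fun h => c h + (h == hk)%:R * a); split.
  move=> h kh; rewrite c_hi ?(ltnW kh) //.
  suff /negbTE-> : h != hk by rewrite mul0r addr0.
  by apply: contraTneq kh => ->; rewrite hkE ltnn.
rewrite -[p](subrK (a *: w hk)) Hc; apply/esym.
under eq_bigr do rewrite scalerDl.
rewrite big_split /=; congr (_ + _).
rewrite (bigD1 hk) //= eqxx mul1r big1 ?addr0 // => h /negbTE ->.
by rewrite mul0r scale0r.
Qed.

Section Hadamard.
Variables (R : comNzRingType) (n : nat).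

Definition hadamard (f g : 'cV[R]_n) : 'cV[R]_n := \col_x (f x 0 * g x 0).

Lemma hadamard_sum (I J : finType) (F : I -> 'cV[R]_n) (G : J -> 'cV[R]_n) :
  hadamard (\sum_i F i) (\sum_j G j) = \sum_i \sum_j hadamard (F i) (G j).
Proof.
apply/matrixP => x o; rewrite !mxE !summxE mulr_suml; apply: eq_bigr => i _.
by rewrite summxE mulr_sumr; apply: eq_bigr => j _; rewrite !mxE.
Qed.

Lemma hadamard0l g : hadamard 0 g = 0.
Proof. by apply/matrixP => x o; rewrite !mxE mul0r. Qed.

Lemma hadamard0r g : hadamard g 0 = 0.
Proof. by apply/matrixP => x o; rewrite !mxE mulr0. Qed.

End Hadamard.

Section BoseMesnerAlgebra.
Variables (R : nzRingType) (n s : nat) (rc : 'I_n -> 'I_n -> 'I_s.+1).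

Lemma in_BM_tr (M : 'M[R]_n) :
  (forall x y, rc x y = rc y x) -> in_BM rc M -> M^T = M.
Proof.
move=> rc_sym [c ->]; apply/matrixP => x y.
by rewrite mxE !summxE; apply: eq_bigr => k _; rewrite !mxE rc_sym.
Qed.

Lemma in_BM_diag (M : 'M[R]_n) :
  (forall x y, (rc x y == ord0) = (x == y)) -> in_BM rc M -> forall x y, M x x = M y y.
Proof.
move=> rc_diag [c ->] x y; rewrite !summxE; apply: eq_bigr => k _; rewrite !mxE.
by have /eqP-> := etrans (rc_diag x x) (eqxx x); have /eqP-> := etrans (rc_diag y y) (eqxx y).
Qed.

End BoseMesnerAlgebra.

Section SphericalSets.
Variables (R : realFieldType) (n m : nat) (Y : 'I_n -> 'rV[R]_m).

Lemma inPol_sum (I : finType) d (F : I -> 'cV[R]_n) :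
  (forall i, inPol Y d (F i)) -> inPol Y d (\sum_i F i).
Proof.
move=> PolF; apply: big_ind => [|f g [l1 [H1 ->]] [l2 [H2 ->]]|i _]; last exact: PolF.
  by exists [::]; rewrite big_nil.
by exists (l1 ++ l2); rewrite all_cat H1 H2 big_cat.
Qed.

Lemma pinnerC p r : pinner Y p r = pinner Y r p.
Proof. by rewrite /pinner; congr (_ * _); apply: eq_bigr => a _; rewrite mulrAC. Qed.

Lemma pinnerZr c p r : pinner Y p (c *: r) = c * pinner Y p r.
Proof.
rewrite /pinner [RHS]mulrCA; congr (_ * _); rewrite mulr_sumr; apply: eq_bigr => a _.
by rewrite hornerZ mulrCA.
Qed.

Lemma pinner_sumr (I : finType) p (F : I -> {poly R}) :
  pinner Y p (\sum_i F i) = \sum_i pinner Y p (F i).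
Proof.
rewrite /pinner -mulr_sumr exchange_big /=; congr (_ * _); apply: eq_bigr => a _.
by rewrite horner_sum mulr_sumr.
Qed.

Lemma sum_uniq_pick (A : seq R) (b : R) (G : R -> R) : uniq A -> b \in A ->
  \sum_(a <- A) (b == a)%:R * G a = G b.
Proof.
move=> uA bA; rewrite (big_rem b) //= eqxx mul1r big1_seq ?addr0 // => a /andP[_ aA].
suff /negbTE-> : b != a by rewrite mul0r.
by apply: contraTneq aA => <-; rewrite mem_rem_uniqF.
Qed.

(* The weights [kappa] turn the sum over the distinct inner products into a
   sum over all ordered pairs; the diagonal lands on [m]. *)
Lemma pinnerE : (forall x, dotv (Y x) (Y x) = m%:R) -> forall p r,
  pinner Y p r = (n%:R ^+ 2)^-1 *
    \sum_x \sum_y p.[dotv (Y x) (Y y)] * r.[dotv (Y x) (Y y)].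
Proof.
move=> Y_sphere p r; rewrite /pinner pair_bigA /=; congr (_ * _).
pose D (xy : 'I_n * 'I_n) := dotv (Y xy.1) (Y xy.2).
have D_Aprime xy : D xy \in Aprime Y.
  rewrite mem_undup inE /D; have [<-|neq] := eqVneq xy.1 xy.2.
    by rewrite Y_sphere eqxx.
  by apply/orP; right; apply/mapP; exists xy; rewrite // mem_enum unfold_in.
transitivity (\sum_(a <- Aprime Y) \sum_xy (D xy == a)%:R * (p.[a] * r.[a])).
  apply: eq_bigr => a _; rewrite -mulr_suml -mulrA; congr (_ * _).
  rewrite /kappa -sum1_card natr_sum big_mkcond /=; apply: eq_bigr => xy _.
  by rewrite unfold_in /=; case: (_ == a).
rewrite exchange_big /=; apply: eq_bigr => xy _.
by rewrite (sum_uniq_pick (fun a => p.[a] * r.[a])) ?undup_uniq.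
Qed.

End SphericalSets.

Section QPolynomialScheme.
Variables (R : realFieldType) (n s m : nat) (E : 'I_s.+1 -> 'M[R]_n).
Variables (v : 'I_s.+1 -> {poly R}) (Y : 'I_n -> 'rV[R]_m).
Let E1 : 'I_s.+1 := inord 1.
Hypothesis s_gt0 : (0 < s)%N.
Hypothesis E_tr : forall i, (E i)^T = E i.
Hypothesis E_diag : forall i x y, E i x x = E i y y.
Hypothesis E_mul : forall i j, E i *m E j = (i == j)%:R *: E i.
Hypothesis E_neq0 : forall i, E i != 0.
Hypothesis E_sum : \sum_i E i = 1%:M.
Hypothesis E_0 : E ord0 = n%:R^-1 *: const_mx 1.
Hypothesis size_v : forall j, size (v j) = j.+1.
Hypothesis v_E : forall j, n%:R *: E j = map_mx (fun a => (v j).[a]) (n%:R *: E E1).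
Hypothesis rank_E1 : m = \rank (E E1).
Hypothesis dotv_E1 : forall x y, dotv (Y x) (Y y) = n%:R * E E1 x y.

Lemma E_sym i x y : E i x y = E i y x.
Proof. by rewrite -[in LHS]E_tr mxE. Qed.

Lemma E_idem i : E i *m E i = E i.
Proof. by rewrite E_mul eqxx scale1r. Qed.

Lemma E_orth i j : i != j -> E i *m E j = 0.
Proof. by move/negbTE=> ij; rewrite E_mul ij scale0r. Qed.

Lemma E_decomp (g : 'cV[R]_n) : g = \sum_i E i *m g.
Proof. by rewrite -mulmx_suml E_sum mul1mx. Qed.

Lemma n_gt0 : (0 < n)%N.
Proof.
rewrite lt0n; apply: contra (E_neq0 ord0) => /eqP n0.
by move: (E ord0); rewrite n0 => M; rewrite flatmx0.
Qed.

Lemma nR_neq0 : n%:R != 0 :> R.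
Proof. by rewrite pnatr_eq0 -lt0n n_gt0. Qed.

Lemma E_diag_trace i x : n%:R * E i x x = \tr (E i).
Proof.
by rewrite /mxtrace (eq_bigr (fun _ => E i x x)) ?sumr_const ?card_ord ?mulr_natl.
Qed.

Lemma tr_E_neq0 i : \tr (E i) != 0.
Proof. by rewrite mxtrace_idem ?E_idem // pnatr_eq0 mxrank_eq0 E_neq0. Qed.

Lemma dotv_diag x : dotv (Y x) (Y x) = m%:R.
Proof. by rewrite dotv_E1 E_diag_trace mxtrace_idem ?E_idem // rank_E1. Qed.

Lemma E_frobenius k l : \sum_x \sum_y E k x y * E l x y = (k == l)%:R * \tr (E k).
Proof.
rewrite -mxtraceZ -E_mul; apply: eq_bigr => x _; rewrite mxE.
by apply: eq_bigr => y _; rewrite (E_sym l).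
Qed.

Lemma horner_v h x y : (v h).[n%:R * E E1 x y] = n%:R * E h x y.
Proof. by have := congr1 (fun M : 'M[R]_n => M x y) (v_E h); rewrite /= !mxE => <-. Qed.

Lemma horner_E1_span k (p : {poly R}) : (k <= s)%N -> (size p <= k.+1)%N ->
  exists c : 'I_s.+1 -> R, (forall h : 'I_s.+1, (k < h)%N -> c h = 0) /\
    forall x y, p.[n%:R * E E1 x y] = \sum_h c h * (n%:R * E h x y).
Proof.
move=> ks sp; have [c [c_hi ->]] := graded_basis_expand size_v (ks : (k.+1 <= s.+1)%N) sp.
exists c; split=> // x y; rewrite horner_sum; apply: eq_bigr => h _.
by rewrite hornerZ horner_v.
Qed.

(* Entrywise, [n E_l * n E_j] is a polynomial of degree [l + j] in [n E_1],
   hence a combination of [E_0, ..., E_(l+j)], all orthogonal to [E_k]. *)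
Lemma E_hadamard_orth (k l j : 'I_s.+1) : (l + j < k)%N ->
  \sum_x \sum_x' E k x x' * E l x x' * E j x x' = 0.
Proof.
move=> ljk.
have size_lj : (size (v l * v j)%R <= (l + j).+1)%N.
  by rewrite (leq_trans (size_mul_leq _ _)) // !size_v addSn addnS.
have [c [c_hi span_lj]] := horner_E1_span (leq_trans (ltnW ljk) (leq_ord k)) size_lj.
apply: (mulfI (mulf_neq0 nR_neq0 nR_neq0)); rewrite mulr0 mulr_sumr.
transitivity (\sum_x \sum_x' \sum_h c h * n%:R * (E h x x' * E k x x')).
  apply: eq_bigr => x _; rewrite mulr_sumr; apply: eq_bigr => x' _.
  transitivity (E k x x' * ((n%:R * E l x x') * (n%:R * E j x x'))); first by ring.
  rewrite -(horner_v l) -(horner_v j) -hornerM span_lj mulr_sumr; apply: eq_bigr => h _; ring.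
under eq_bigr do rewrite exchange_big; rewrite exchange_big; apply: big1 => h _.
under eq_bigr do rewrite -mulr_sumr; rewrite -mulr_sumr E_frobenius.
have [->|_] := eqVneq h k; last by rewrite mul0r mulr0.
by rewrite c_hi // !mul0r.
Qed.

Lemma krein_vanish (k l j : 'I_s.+1) : (l + j < k)%N ->
  forall w y z, \sum_x E k w x * E l x y * E j x z = 0.
Proof.
move=> ljk w y z.
have := sum_sqr_triple (E_idem k) (E_tr k) (E_idem l) (E_tr l) (E_idem j) (E_tr j).
rewrite E_hadamard_orth //; under eq_bigr do rewrite pair_bigA; rewrite pair_bigA.
by move/sum_sqr_eq0/(_ (w, (y, z))).
Qed.

Lemma E_hadamard_E (k l j : 'I_s.+1) : (l + j < k)%N ->
  forall f g, E k *m hadamard (E l *m f) (E j *m g) = 0.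
Proof.
move=> ljk f g; apply/matrixP => w o; rewrite !mxE.
transitivity (\sum_x \sum_y \sum_z E k w x * E l x y * E j x z * f y 0 * g z 0).
  apply: eq_bigr => x _; rewrite !mxE mulrA [E k w x * _]mulr_sumr mulr_suml.
  by apply: eq_bigr => y _; rewrite mulr_sumr; apply: eq_bigr => z _; ring.
rewrite exchange_big big1 // => y _; rewrite exchange_big big1 // => z _.
by rewrite -!mulr_suml krein_vanish // !mul0r.
Qed.

(* [in_Vle d g] means g is in V_0 + ... + V_d, and [in_V i g] that g is in V_i. *)
Definition in_Vle (d : nat) (g : 'cV[R]_n) :=
  forall k : 'I_s.+1, (d < k)%N -> E k *m g = 0.

Definition in_V (i : nat) (g : 'cV[R]_n) :=
  forall k : 'I_s.+1, (k : nat) != i -> E k *m g = 0.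

Lemma in_Vle_le d d' g : (d <= d')%N -> in_Vle d g -> in_Vle d' g.
Proof. by move=> dd' Vg k d'k; apply: Vg; apply: leq_ltn_trans d'k. Qed.

Lemma in_Vle_sum (I : Type) (r : seq I) (P : pred I) d (F : I -> 'cV[R]_n) :
  (forall i, P i -> in_Vle d (F i)) -> in_Vle d (\sum_(i <- r | P i) F i).
Proof. by move=> VF k dk; rewrite mulmx_sumr big1 // => i Pi; apply: VF. Qed.

Lemma in_VleZ d c g : in_Vle d g -> in_Vle d (c *: g).
Proof. by move=> Vg k dk; rewrite -scalemxAr Vg // scaler0. Qed.

Lemma in_Vle_hadamard a b f g :
  in_Vle a f -> in_Vle b g -> in_Vle (a + b) (hadamard f g).
Proof.
move=> Vf Vg; rewrite (E_decomp f) (E_decomp g) hadamard_sum.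
apply: in_Vle_sum => l _; apply: in_Vle_sum => j _ k abk.
have [al|la] := ltnP a l; first by rewrite Vf // hadamard0l mulmx0.
have [bj|jb] := ltnP b j; first by rewrite Vg // hadamard0r mulmx0.
by apply: E_hadamard_E; apply: leq_ltn_trans abk; apply: leq_add.
Qed.

Lemma in_Vle_const1 : in_Vle 0 (const_mx 1).
Proof.
have -> : (const_mx 1 : 'cV[R]_n) = E ord0 *m const_mx 1.
  apply/matrixP => x o; rewrite E_0 !mxE.
  under eq_bigr do rewrite !mxE !mulr1.
  by rewrite sumr_const card_ord -[_ *+ n]mulr_natr mulVf ?nR_neq0.
move=> k k_gt0; rewrite mulmxA E_orth ?mul0mx //.
by apply: contraTneq k_gt0 => ->.
Qed.

(* [E k *m Ymat] has Gram matrix [n E_k E_1], which vanishes unless [k = 1]. *)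
Lemma in_Vle_dotv (a : 'rV[R]_m) : in_Vle 1 (\col_x dotv a (Y x)).
Proof.
pose Ymat : 'M[R]_(n, m) := \matrix_(x, j) Y x 0 j.
have Gram : Ymat *m Ymat^T = n%:R *: E E1.
  apply/matrixP => x y; rewrite !mxE -dotv_E1 /dotv !mxE.
  by apply: eq_bigr => j _; rewrite !mxE.
have -> : \col_x dotv a (Y x) = Ymat *m a^T.
  apply/matrixP => x o; rewrite (ord1 o) /dotv !mxE.
  by apply: eq_bigr => j _; rewrite !mxE mulrC.
move=> k k_gt1; rewrite mulmxA; suff -> : E k *m Ymat = 0 by rewrite mul0mx.
have kE1 : k != E1 by apply: contraTneq k_gt1 => ->; rewrite inordK.
apply: mulmx_trmx_eq0.
by rewrite trmx_mul E_tr mulmxA -(mulmxA (E k)) Gram -scalemxAr E_orth // scaler0 mul0mx.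
Qed.

Lemma in_Vle_exp f : in_Vle 1 f -> forall i, in_Vle i (map_mx (fun a => a ^+ i) f).
Proof.
move=> Vf; elim=> [|i IH].
  suff -> : map_mx (fun a => a ^+ 0) f = const_mx 1 by exact: in_Vle_const1.
  by apply/matrixP => x o; rewrite !mxE.
have -> : map_mx (fun a => a ^+ i.+1) f = hadamard f (map_mx (fun a => a ^+ i) f).
  by apply/matrixP => x o; rewrite (ord1 o) !mxE exprS.
by rewrite -add1n; apply: in_Vle_hadamard.
Qed.

Lemma in_Vle_zeta a (p : {poly R}) d : (size p <= d.+1)%N -> in_Vle d (zeta Y a p).
Proof.
move=> sp.
have -> : zeta Y a p =
    \sum_(i < size p) p`_i *: map_mx (fun t => t ^+ i) (\col_x dotv a (Y x)).
  apply/matrixP => x o; rewrite /zeta summxE !mxE horner_coef.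
  by apply: eq_bigr => i _; rewrite !mxE.
apply: in_Vle_sum => i _; apply: in_VleZ.
apply: (@in_Vle_le i); last exact: in_Vle_exp (in_Vle_dotv a) i.
by rewrite -ltnS (leq_trans (ltn_ord i)).
Qed.

Lemma in_Vle_inPol d g : in_Vle d g -> inPol Y d g.
Proof.
move=> Vg; rewrite (E_decomp g); apply: inPol_sum => l.
have [dl|ld] := ltnP d l; first by rewrite Vg //; exists [::]; rewrite big_nil.
have -> : E l *m g = \sum_y zeta Y (Y y) ((g y 0 / n%:R) *: v l).
  apply/matrixP => x o; rewrite (ord1 o) summxE !mxE; apply: eq_bigr => y _.
  by rewrite mxE hornerZ dotv_E1 horner_v (E_sym l y x) mulrA divfK ?nR_neq0 // mulrC.
apply: inPol_sum => y; exists [:: (Y y, (g y 0 / n%:R) *: v l)].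
by rewrite big_seq1 /= (leq_trans (size_scale_leq _ _)) // size_v.
Qed.

Lemma inPolE d g : inPol Y d g <-> in_Vle d g.
Proof.
split; last exact: in_Vle_inPol.
case=> l [/allP size_l ->]; rewrite big_seq.
by apply: in_Vle_sum => -[a p] /size_l; apply: in_Vle_zeta.
Qed.

Lemma in_V_fix i g : (i <= s)%N -> in_V i g -> g = E (inord i) *m g.
Proof.
move=> iS Vg; rewrite {1}(E_decomp g) (bigD1 (inord i)) //= big1 ?addr0 // => k ki.
by apply: Vg; apply: contra ki => /eqP ik; apply/eqP/val_inj; rewrite /= inordK.
Qed.

Lemma E_in_V i g : (i <= s)%N -> in_V i (E (inord i) *m g).
Proof.
move=> iS k ki; rewrite mulmxA E_orth ?mul0mx //.
by apply: contra ki => /eqP->; rewrite inordK.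
Qed.

Lemma inHarmE i g : (i <= s)%N -> inHarm Y i g <-> in_V i g.
Proof.
case: i => [|i] iS /=.
  by rewrite inPolE; split=> Vg k; [rewrite -lt0n; apply: Vg | rewrite lt0n; apply: Vg].
rewrite inPolE; split=> [[Vg orth] k ki|Vg].
  have [ik|ki'|ek] := ltngtP i.+1 k; first exact: Vg.
    apply: innerC_eq0; rewrite -{1}[E k]E_tr -innerC_trmx mulmxA E_idem.
    apply: orth; apply/inPolE => k' ik'; rewrite mulmxA E_orth ?mul0mx //.
    by apply: contraTneq ik' => ->; rewrite -leqNgt -ltnS.
  by move: ki; rewrite -ek eqxx.
split=> [k ik|h /inPolE Vh].
  by apply: Vg; rewrite neq_ltn ik orbT.
rewrite (in_V_fix iS Vg) -[E _]E_tr -innerC_trmx Vh ?innerC0r //.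
by rewrite inordK.
Qed.

Lemma E_orth_proj i : (i <= s)%N -> is_orth_proj (inHarm Y i) (E (inord i)).
Proof.
move=> iS g; split; first by apply/inHarmE => //; apply: E_in_V.
move=> h /(inHarmE _ iS) Vh.
by rewrite (in_V_fix iS Vh) innerC_trmx E_tr mulmxBr mulmxA E_idem subrr innerC0l.
Qed.

Lemma orth_projE i F : (i <= s)%N -> is_orth_proj (inHarm Y i) F <-> F = E (inord i).
Proof.
move=> iS; split=> [PF|->]; last exact: E_orth_proj.
apply: orth_proj_unique PF (E_orth_proj iS) => f g /(inHarmE _ iS) Vf /(inHarmE _ iS) Vg.
by apply/inHarmE => // k ki; rewrite mulmxBr Vf // Vg // subrr.
Qed.

Lemma degree_s : is_degree Y s.
Proof.
split=> [g|i si Pol_i]; first by apply/inPolE => k; rewrite ltnNge leq_ord.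
have /eqP := E_neq0 ord_max; apply; apply: mulmx_col_inj => g.
by rewrite mul0mx; apply: (proj1 (inPolE i g) (Pol_i g)).
Qed.

Lemma pinner_v h l : pinner Y (v h) (v l) = (h == l)%:R * \tr (E h).
Proof.
rewrite pinnerE; last exact: dotv_diag.
rewrite -E_frobenius -[RHS](mulKf (expf_neq0 2 nR_neq0)) [in RHS]mulr_sumr.
congr (_ * _).
apply: eq_bigr => x _; rewrite mulr_sumr; apply: eq_bigr => y _.
by rewrite dotv_E1 !horner_v; ring.
Qed.

Lemma pinner_expand_v (c : 'I_s.+1 -> R) l :
  pinner Y (\sum_h c h *: v h) (v l) = c l * \tr (E l).
Proof.
rewrite pinnerC pinner_sumr (bigD1 l) //= big1 => [|h hl].
  by rewrite pinnerZr pinner_v eqxx mul1r addr0.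
by rewrite pinnerZr pinner_v eq_sym (negbTE hl) mul0r mulr0.
Qed.

Lemma horner_v_m h : (v h).[m%:R] = \tr (E h).
Proof.
by rewrite -(dotv_diag (Ordinal n_gt0)) dotv_E1 horner_v E_diag_trace.
Qed.

Section Predegree.
Variable q : nat -> {poly R}.
Hypothesis q_predegree : predegree Y s q.

Lemma predegree_orth_v i (l : 'I_s.+1) : (i <= s)%N -> (l < i)%N ->
  pinner Y (q i) (v l) = 0.
Proof.
move=> iS li.
have size_q (h : 'I_s.+1) : size (q h) = h.+1 by case: (q_predegree (leq_ord h) (leq_ord h)).
have [d [d_hi ->]] := graded_basis_expand size_q (ltn_ord l) (eq_leq (size_v l)).
rewrite pinner_sumr big1 // => h _; rewrite pinnerZr.
have [lh|hl] := ltnP l h; first by rewrite d_hi // mul0r.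
have [_ ->] := q_predegree iS (leq_ord h).
suff /negbTE-> : i != h by rewrite !mul0r mulr0.
by rewrite neq_ltn (leq_ltn_trans hl li) orbT.
Qed.

Lemma predegree_v i : (i <= s)%N -> q i = v (inord i).
Proof.
move=> iS; pose ii : 'I_s.+1 := inord i.
have iiE : (ii : nat) = i by rewrite inordK.
have [size_qi pinner_qi] := q_predegree iS iS.
have [c [c_hi qiE]] := graded_basis_expand size_v (iS : (i.+1 <= s.+1)%N) (eq_leq size_qi).
have c_lo (l : 'I_s.+1) : (l < i)%N -> c l = 0.
  move=> li; have := predegree_orth_v iS li.
  by rewrite qiE pinner_expand_v => /eqP; rewrite mulf_eq0 (negbTE (tr_E_neq0 l)) orbF => /eqP.
have {qiE} qiE : q i = c ii *: v ii.
  rewrite qiE (bigD1 ii) //= big1 ?addr0 // => h hi.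
  have [hl|ih|he] := ltngtP h i; first by rewrite c_lo ?scale0r.
    by rewrite c_hi ?scale0r.
  by move: hi; rewrite -val_eqE /= iiE he eqxx.
have c_neq0 : c ii != 0.
  by apply: contra_eqN size_qi => /eqP c0; rewrite qiE c0 scale0r size_poly0.
move: pinner_qi; rewrite eqxx mul1r qiE pinnerZr pinnerC pinnerZr pinner_v eqxx mul1r.
rewrite hornerZ horner_v_m.
move=> /(mulfI c_neq0) /eqP; rewrite -[X in _ == X]mul1r (inj_eq (mulIf (tr_E_neq0 ii))).
by move=> /eqP->; rewrite scale1r.
Qed.

Lemma predegree_E i : (i <= s)%N ->
  n%:R^-1 *: \matrix_(x, y) (q i).[dotv (Y x) (Y y)] = E (inord i).
Proof.
move=> iS; apply/matrixP => x y.
by rewrite !mxE predegree_v // dotv_E1 horner_v mulKf ?nR_neq0.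
Qed.

End Predegree.

End QPolynomialScheme.

Theorem lemma3p5 (R : realFieldType) (n s : nat) (rc : 'I_n -> 'I_n -> 'I_s.+1)
  (E : 'I_s.+1 -> 'M[R]_n) (m : nat) (Y : 'I_n -> 'rV[R]_m) (q : nat -> {poly R}) :
  (0 < s)%N ->
  is_sym_assoc_scheme rc ->
  primitive_idempotents rc E ->
  Q_polynomial E ->
  m = \rank (E (inord 1)) ->
  (forall x y, dotv (Y x) (Y y) = n%:R * E (inord 1) x y) ->
  predegree Y s q ->
  is_degree Y s /\
  (forall i : nat, (i <= s)%N -> forall F : 'M[R]_n,
     is_orth_proj (inHarm Y i) F <->
     F = (n%:R)^-1 *: \matrix_(x, y) (q i).[dotv (Y x) (Y y)]).
Proof.
move=> s_gt0 [rc_diag rc_sym _ _] [E_BM E_mul E_neq0 E_sum E_0] [v v_spec].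
move=> rank_E1 dotv_E1 q_predegree.
have E_tr i : (E i)^T = E i := in_BM_tr rc_sym (E_BM i).
have E_diag i : forall x y, E i x x = E i y y := in_BM_diag rc_diag (E_BM i).
have size_v j : size (v j) = j.+1 := (v_spec j).1.
have v_E j := (v_spec j).2.
split; first exact: degree_s s_gt0 E_tr E_mul E_neq0 E_sum E_0 size_v v_E dotv_E1.
move=> i iS F.
rewrite (orth_projE s_gt0 E_tr E_mul E_neq0 E_sum E_0 size_v v_E dotv_E1 F iS).
by rewrite (predegree_E E_tr E_diag E_mul E_neq0 size_v v_E rank_E1 dotv_E1 q_predegree iS).
Qed.
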